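(* Let $d\ge2$, $s\in[-\infty,0]$, let $\rho$ be a density matrix on $\mathbb{C}^d$ and $X,Y$ be $d\times d$ Hermitian matrices. Then $I^s(\rho,X)\,I^s(\rho,Y)\ge\frac{1}{16}\left(I^s(\rho,X+Y)-I^s(\rho,X-Y)\right)^2.$
   Context: Write $\rho=\sum_{i}\lambda_i|\psi_i\rangle\langle\psi_i|$ (orthonormal eigenbasis, $\lambda_1\ge\cdots\ge\lambda_d\ge0$). For $-\infty<s<0$ and $a_1,a_2>0$ let $m_s(a_1,a_2)=\left(\frac{a_1^s+a_2^s}{2}\right)^{1/s}$; $m_0(a_1,a_2)=\sqrt{a_1a_2}$; $m_{-\infty}(a_1,a_2)=\min\{a_1,a_2\}$; and $m_s(a,0)=m_s(0,a)=m_s(0,0)=0$. Define $\zeta_\rho^s(X,Y)=\mathrm{Tr}[\rho X^\dagger Y]-\sum_{i,j} m_s(\lambda_i,\lambda_j)\langle\psi_i|X^\dagger|\psi_j\rangle\langle\psi_j|Y|\psi_i\rangle$ and $I^s(\rho,X)=\zeta_\rho^s(X,X)$. *)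

From HB Require Import structures.
From mathcomp Require Import all_boot all_order all_algebra.
From mathcomp Require Import complex.
From mathcomp Require Import reals constructive_ereal exp.
Set Implicit Arguments. Unset Strict Implicit. Unset Printing Implicit Defensive.
Import Order.TTheory GRing.Theory Num.Theory.
Local Open Scope ring_scope.

Section Defs.
Variable R : realType.
Local Notation C := R[i].

Definition adjmx m n (A : 'M[C]_(m, n)) : 'M[C]_(n, m) := map_mx Num.conj A^T.

Definition hermitian_mx n (A : 'M[C]_n) : Prop := adjmx A = A.

Definition density_matrix n (rho : 'M[C]_n) : Prop :=
  [/\ hermitian_mx rho,
      (forall v : 'cV[C]_n, 0 <= (adjmx v *m rho *m v) 0 0)
    & \tr rho = 1].

Definition eigendecomp n (rho : 'M[C]_n) (lam : 'I_n -> R) (U : 'M[C]_n) : Prop :=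
  [/\ adjmx U *m U = 1%:M,
      (forall i, 0 <= lam i),
      (forall i j : 'I_n, (i <= j)%N -> lam j <= lam i)
    & rho = \sum_i (lam i)%:C%C *: (col i U *m adjmx (col i U))].

Definition mean_s (s : \bar R) (a b : R) : R :=
  if (a == 0) || (b == 0) then 0 else
  match s with
  | -oo%E => Num.min a b
  | +oo%E => 0 (* not used: s <= 0 *)
  | r%:E => if r == 0 then Num.sqrt (a * b)
            else powR ((powR a r + powR b r) / 2) r^-1
  end.

Definition braket n (U : 'M[C]_n) (i : 'I_n) (A : 'M[C]_n) (j : 'I_n) : C :=
  (adjmx (col i U) *m A *m col j U) 0 0.

Definition zeta n (s : \bar R) (rho : 'M[C]_n) (lam : 'I_n -> R) (U : 'M[C]_n)
  (X Y : 'M[C]_n) : C :=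
  \tr (rho *m adjmx X *m Y)
  - \sum_i \sum_j (mean_s s (lam i) (lam j))%:C%C
                    * braket U i (adjmx X) j * braket U j Y i.

Definition Is n (s : \bar R) (rho : 'M[C]_n) (lam : 'I_n -> R) (U : 'M[C]_n)
  (X : 'M[C]_n) : C := zeta s rho lam U X X.

End Defs.

From HB Require Import structures.
From mathcomp Require Import all_boot all_order all_algebra.
From mathcomp Require Import complex.
From mathcomp Require Import reals constructive_ereal sequences exp convex.
From mathcomp Require Import interval_inference ring lra.
Set Implicit Arguments. Unset Strict Implicit. Unset Printing Implicit Defensive.
Import Order.TTheory GRing.Theory Num.Theory.
Local Open Scope ring_scope.

(* Write z = U^* Z U for the matrix of a Hermitian Z in the eigenbasis of rho.
   Then I^s(rho, Z) = sum_ij (lam_i - m_s(lam_i, lam_j)) |z_ij|^2, and since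
   |z_ij| = |z_ji| the weights may be symmetrized to
   (lam_i + lam_j)/2 - m_s(lam_i, lam_j), which are nonnegative because for
   s <= 0 the mean m_s lies below the geometric and hence the arithmetic mean.
   So I^s(rho, .) is the quadratic form of a positive semidefinite real
   bilinear form B; by polarization I^s(X+Y) - I^s(X-Y) = 4 B(X, Y), and the
   claim is the Cauchy-Schwarz inequality B(X, Y)^2 <= I^s(X) I^s(Y). *)

Section Means.
Variable R : realType.

Lemma expR_midpoint_le (x y : R) : expR ((x + y) / 2) <= (expR x + expR y) / 2.
Proof.
have half_ge0 : (0 : R) <= 2^-1 by rewrite invr_ge0 ler0n.
have half_le1 : (2^-1 : R) <= 1 by rewrite invf_le1 ?ler1n.
have onem_half : 1 - 2^-1 = 2^-1 :> R by field.
have := convex_expR (Itv01 half_ge0 half_le1) x y.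
by rewrite !convRE /= /unstable.onem onem_half -!mulrDr !(mulrC 2^-1).
Qed.

Lemma geometric_le_arithmetic (a b : R) : 0 < a -> 0 < b ->
  expR ((ln a + ln b) / 2) <= (a + b) / 2.
Proof. by move=> a0 b0; have := expR_midpoint_le (ln a) (ln b); rewrite !lnK. Qed.

Lemma power_mean_le_geometric (a b r : R) : 0 < a -> 0 < b -> r < 0 ->
  ((a `^ r + b `^ r) / 2) `^ r^-1 <= expR ((ln a + ln b) / 2).
Proof.
move=> a0 b0 r0; set u := (a `^ r + b `^ r) / 2.
have u0 : 0 < u by rewrite divr_gt0 ?addr_gt0 ?powR_gt0.
have ln_u : r * ((ln a + ln b) / 2) <= ln u.
  rewrite -ler_expR lnK ?posrE // (_ : r * _ = (r * ln a + r * ln b) / 2); last by ring.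
  by rewrite /u /powR !gt_eqF //; apply: expR_midpoint_le.
rewrite /powR gt_eqF // ler_expR.
by rewrite -[leRHS](mulKf (ltr0_neq0 r0)) ler_nM2l ?invr_lt0.
Qed.

Lemma mean_s_le_midpoint (s : \bar R) (a b : R) : (s <= 0)%E -> 0 <= a -> 0 <= b ->
  mean_s s a b <= (a + b) / 2.
Proof.
move=> s_le0 a_ge0 b_ge0; have mid_ge0 : 0 <= (a + b) / 2 by rewrite divr_ge0 ?addr_ge0.
rewrite /mean_s; case: ifPn => [//|/norP[a_neq0 b_neq0]].
have a_gt0 : 0 < a by rewrite lt_def a_neq0.
have b_gt0 : 0 < b by rewrite lt_def b_neq0.
case: s s_le0 => [r r_le0| // | _].
- rewrite lee_fin in r_le0; case: ifPn => [_|r_neq0].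
    rewrite -(ger0_norm mid_ge0) -sqrtr_sqr ler_sqrt ?sqr_ge0 //.
    exact: (leif_AGM2 a b).1.
  have r_lt0 : r < 0 by rewrite lt_neqAle r_neq0.
  exact: le_trans (power_mean_le_geometric a_gt0 b_gt0 r_lt0)
                  (geometric_le_arithmetic a_gt0 b_gt0).
- rewrite ge_min; have [ab|/ltW ba] := leP a b; first by rewrite (midf_le ab).1.
  by rewrite addrC (midf_le ba).1 orbT.
Qed.

End Means.

Section QuadraticForms.
Variable R : realFieldType.

Lemma quad_form_ge0_discr (A B C : R) :
  (forall x y, 0 <= x ^+ 2 * A + 2 * x * y * B + y ^+ 2 * C) -> B ^+ 2 <= A * C.
Proof.
move=> psd.
have A_ge0 : 0 <= A by have := psd 1 0; lra.
have C_ge0 : 0 <= C by have := psd 0 1; lra.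
have [A_gt0|A_le0] := ltrP 0 A.
  have := psd B (- A).
  rewrite (_ : _ + _ + _ = A * (A * C - B ^+ 2)); last by ring.
  by rewrite pmulr_rge0 // subr_ge0.
have [C_gt0|C_le0] := ltrP 0 C.
  have := psd C (- B).
  rewrite (_ : _ + _ + _ = C * (A * C - B ^+ 2)); last by ring.
  by rewrite pmulr_rge0 // subr_ge0.
have -> : A = 0 by apply/le_anti; rewrite A_le0 A_ge0.
have -> : C = 0 by apply/le_anti; rewrite C_le0 C_ge0.
by have := psd 1 1; have := psd 1 (-1); nra.
Qed.

Lemma sum_sym_midpoint (I : finType) (a : I -> R) (m f : I -> I -> R) :
  (forall i j, f i j = f j i) ->
  \sum_i \sum_j (a i - m i j) * f i j = \sum_i \sum_j ((a i + a j) / 2 - m i j) * f i j.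
Proof.
move=> fC.
have antisym : \sum_i \sum_j (a i - a j) / 2 * f i j = 0.
  set S := LHS; suff : S = - S by lra.
  rewrite {1}/S exchange_big -sumrN; apply: eq_bigr => i _.
  by rewrite -sumrN; apply: eq_bigr => j _; rewrite fC; ring.
rewrite -[RHS]addr0 -[X in _ + X]antisym -big_split; apply: eq_bigr => i _.
by rewrite -big_split; apply: eq_bigr => j _ /=; field.
Qed.

End QuadraticForms.

Definition dotc (R : pzRingType) (x y : R[i]) : R :=
  complex.Re x * complex.Re y + complex.Im x * complex.Im y.

Lemma mulcJ (R : rcfType) (z : R[i]) : z * Num.conj z = (dotc z z)%:C%C.
Proof. by case: z => a b; simpc; rewrite /dotc /= -!expr2 [b * a]mulrC addNr. Qed.

Lemma dotcJ (R : rcfType) (z : R[i]) : dotc (Num.conj z) (Num.conj z) = dotc z z.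
Proof. by case: z => a b; rewrite /dotc /= mulrNN. Qed.

Section WeightedForm.
Variables (R : realFieldType) (m n : nat) (w : 'I_m -> 'I_n -> R).

Definition wdotmx (A B : 'M[R[i]]_(m, n)) : R :=
  \sum_i \sum_j w i j * dotc (A i j) (B i j).

Lemma wdotmx_polarization A B :
  wdotmx (A + B) (A + B) - wdotmx (A - B) (A - B) = 4 * wdotmx A B.
Proof.
rewrite /wdotmx !pair_bigA -sumrB mulr_sumr; apply: eq_bigr => -[i j] _ /=.
by rewrite !mxE /dotc; case: (A i j) (B i j) => [a b] [c e] /=; ring.
Qed.

Lemma wdotmx_cauchy_schwarz A B : (forall i j, 0 <= w i j) ->
  wdotmx A B ^+ 2 <= wdotmx A A * wdotmx B B.
Proof.
move=> w_ge0; apply: quad_form_ge0_discr => x y.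
rewrite /wdotmx !pair_bigA !mulr_sumr -!big_split /=; apply: sumr_ge0 => -[i j] _ /=.
rewrite /dotc; set a := complex.Re (A i j); set b := complex.Im (A i j).
set c := complex.Re (B i j); set e := complex.Im (B i j).
rewrite (_ : _ + _ + _ = w i j * ((x * a + y * c) ^+ 2 + (x * b + y * e) ^+ 2)); last by ring.
by rewrite mulr_ge0 ?addr_ge0 ?sqr_ge0.
Qed.

End WeightedForm.

Section Adjoint.
Variable R : realType.
Local Notation C := R[i].

Lemma adjmxM m n p (A : 'M[C]_(m, n)) (B : 'M[C]_(n, p)) :
  adjmx (A *m B) = adjmx B *m adjmx A.
Proof.
apply/matrixP => i j; rewrite !mxE rmorph_sum; apply: eq_bigr => k _.
by rewrite !mxE rmorphM mulrC.
Qed.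

Lemma adjmxK m n (A : 'M[C]_(m, n)) : adjmx (adjmx A) = A.
Proof. by apply/matrixP => i j; rewrite !mxE conjCK. Qed.

Lemma hermitian_mxD n (A B : 'M[C]_n) :
  hermitian_mx A -> hermitian_mx B -> hermitian_mx (A + B).
Proof.
move=> hA hB; rewrite /hermitian_mx -{2}hA -{2}hB.
by apply/matrixP => i j; rewrite !mxE rmorphD.
Qed.

Lemma hermitian_mxB n (A B : 'M[C]_n) :
  hermitian_mx A -> hermitian_mx B -> hermitian_mx (A - B).
Proof.
move=> hA hB; rewrite /hermitian_mx -{2}hA -{2}hB.
by apply/matrixP => i j; rewrite !mxE rmorphB.
Qed.

End Adjoint.

Definition coordmx (R : realType) n (U A : 'M[R[i]]_n) := adjmx U *m A *m U.

Section Coordinates.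
Variables (R : realType) (n : nat) (U : 'M[R[i]]_n).
Local Open Scope complex_scope.

Lemma braketE i A j : braket U i A j = coordmx U A i j.
Proof.
rewrite /braket /coordmx !mxE; apply: eq_bigr => l _; rewrite !mxE; congr (_ * _).
by apply: eq_bigr => k _; rewrite !mxE.
Qed.

Lemma coordmx_adj A : coordmx U (adjmx A) = adjmx (coordmx U A).
Proof. by rewrite /coordmx !adjmxM adjmxK mulmxA. Qed.

Lemma coordmxD A B : coordmx U (A + B) = coordmx U A + coordmx U B.
Proof. by rewrite /coordmx mulmxDr mulmxDl. Qed.

Lemma coordmxB A B : coordmx U (A - B) = coordmx U A - coordmx U B.
Proof. by rewrite /coordmx mulmxBr mulmxBl. Qed.

Lemma coordmxM A B : U *m adjmx U = 1%:M ->
  coordmx U (A *m B) = coordmx U A *m coordmx U B.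
Proof. by move=> UU; rewrite /coordmx !mulmxA -(mulmxA _ U) UU mulmx1. Qed.

Lemma hermitian_coordmx A i j : hermitian_mx A ->
  coordmx U A j i = Num.conj (coordmx U A i j).
Proof. by move=> hA; rewrite -{1}hA coordmx_adj !mxE. Qed.

Variables (rho : 'M[R[i]]_n) (lam : 'I_n -> R).
Hypothesis rho_eig : eigendecomp rho lam U.

Lemma mxtrace_eigendecomp_mul M :
  \tr (rho *m M) = \sum_i (lam i)%:C * coordmx U M i i.
Proof.
case: rho_eig => _ _ _ ->; rewrite mulmx_suml linear_sum; apply: eq_bigr => i _ /=.
rewrite -scalemxAl mxtraceZ -braketE /braket -mulmxA mxtrace_mulC.
by rewrite /mxtrace big_ord1.
Qed.

Lemma Is_coord_sum s Z : hermitian_mx Z ->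
  Is s rho lam U Z = (\sum_i \sum_j (lam i - mean_s s (lam i) (lam j)) *
                        dotc (coordmx U Z i j) (coordmx U Z i j))%:C.
Proof.
move=> hZ; have UU : U *m adjmx U = 1%:M by case: rho_eig => /mulmx1C.
rewrite /Is /zeta hZ -mulmxA mxtrace_eigendecomp_mul coordmxM //.
rewrite rmorph_sum -sumrB; apply: eq_bigr => i _.
rewrite rmorph_sum mxE mulr_sumr -sumrB; apply: eq_bigr => j _.
rewrite !braketE (hermitian_coordmx i j hZ) rmorphM rmorphB /= -mulrA mulcJ.
ring.
Qed.

Definition mean_gap (s : \bar R) (lam : 'I_n -> R) i j : R :=
  (lam i + lam j) / 2 - mean_s s (lam i) (lam j).

Lemma Is_wdotmx s Z : hermitian_mx Z ->
  Is s rho lam U Z = (wdotmx (mean_gap s lam) (coordmx U Z) (coordmx U Z))%:C.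
Proof.
move=> hZ; rewrite Is_coord_sum // sum_sym_midpoint // => i j.
by rewrite (hermitian_coordmx i j hZ) dotcJ.
Qed.

End Coordinates.

Theorem theorem5 (R : realType) (d : nat) (s : \bar R)
  (rho : 'M[R[i]]_d) (lam : 'I_d -> R) (U : 'M[R[i]]_d) (X Y : 'M[R[i]]_d) :
  (2 <= d)%N ->
  (s <= 0)%E ->
  density_matrix rho ->
  eigendecomp rho lam U ->
  hermitian_mx X -> hermitian_mx Y ->
  Is s rho lam U X * Is s rho lam U Y >=
    (16%:R)^-1 * (Is s rho lam U (X + Y) - Is s rho lam U (X - Y)) ^+ 2.
Proof.
move=> _ s_le0 _ rho_eig hX hY.
have gap_ge0 i j : 0 <= mean_gap s lam i j.
  by rewrite subr_ge0; case: rho_eig => _ lam_ge0 _ _; apply: mean_s_le_midpoint.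
have hXpY := hermitian_mxD hX hY; have hXmY := hermitian_mxB hX hY.
rewrite !(Is_wdotmx rho_eig) //.
rewrite coordmxD coordmxB -rmorphB wdotmx_polarization.
have -> : (16%:R : R[i])^-1 = (16%:R^-1)%:C%C by rewrite fmorphV rmorph_nat.
rewrite -rmorphXn -!rmorphM lecR.
set b := wdotmx _ _ _; rewrite (_ : 16%:R^-1 * (4 * b) ^+ 2 = b ^+ 2); last by field.
exact: wdotmx_cauchy_schwarz.
Qed.
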